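(* Let $n\ge 1$ and let $f_1,\dots,f_n:\mathbb{R}^n\to\mathbb{R}$ be $C^1$ functions such that for all $x\in\mathbb{R}^n$ $$-f_i(x)+\sum_{j=1}^n f_j(x)\frac{\partial f_i}{\partial x_j}(x)=0\quad(1\le i\le n),\qquad \sum_{i,j=1}^n f_{j,i}(x)f_{i,j}(x)=0,\qquad \sum_{i=1}^n f_{i,i}(x)=0 .$$ Then the functions $v_i(t,x):=-\frac{f_i(x)}{1-t}$, $1\le i\le n$, satisfy the incompressible Euler equations on $[0,1)\times\mathbb{R}^n$ with initial data $h_i=-f_i$.
   Context: The incompressible Euler equations on $\mathbb{R}^n$ are $\partial_t v_i+\sum_{j=1}^n v_j\partial_{x_j}v_i=-\partial_{x_i}p$ ($1\le i\le n$), $\sum_{i=1}^n\partial_{x_i}v_i=0$, $v_i(0,x)=h_i(x)$, for a velocity field $v$ and a pressure $p$. Notation: $f_{i,j}:=\partial f_i/\partial x_j$. *)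

From HB Require Import structures.
From mathcomp Require Import all_boot all_order all_algebra.
From mathcomp Require Import all_classical all_reals all_analysis.
Set Implicit Arguments. Unset Strict Implicit. Unset Printing Implicit Defensive.
Import Order.TTheory GRing.Theory Num.Theory.
Import numFieldNormedType.Exports.
Local Open Scope classical_set_scope.
Local Open Scope ring_scope.

Definition ebase {R : realType} {n : nat} (j : 'I_n) : 'rV[R]_n := delta_mx 0 j.

Definition pderiv {R : realType} {n : nat} (f : 'rV[R]_n -> R) (j : 'I_n)
  (x : 'rV[R]_n) : R := 'D_(ebase j) f x.

Definition C1 {R : realType} {n : nat} (f : 'rV[R]_n -> R) : Prop :=
  (forall x, differentiable f x) /\ (forall j : 'I_n, continuous (pderiv f j)).

Definition tderiv {R : realType} {n : nat} (g : R -> 'rV[R]_n -> R) (t : R)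
  (x : 'rV[R]_n) : R := 'D_1 (fun s : R => g s x) t.

Definition euler_solution {R : realType} {n : nat} (T : set R)
  (v : 'I_n -> R -> 'rV[R]_n -> R) (p : R -> 'rV[R]_n -> R)
  (h : 'I_n -> 'rV[R]_n -> R) : Prop :=
  [/\ (forall t x, T t -> forall i : 'I_n,
         [/\ derivable (fun s : R => v i s x) t 1,
             (forall j : 'I_n, derivable (v i t) x (ebase j)),
             derivable (p t) x (ebase i) &
             tderiv (v i) t x + \sum_(j < n) v j t x * pderiv (v i t) j x
               = - pderiv (p t) i x]),
      (forall t x, T t -> \sum_(i < n) pderiv (v i t) i x = 0) &
      (forall i x, v i 0 x = h i x)].

From HB Require Import structures.
From mathcomp Require Import all_boot all_order all_algebra.
From mathcomp Require Import all_classical all_reals all_analysis.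
From mathcomp Require Import ring.
Import Order.TTheory GRing.Theory Num.Theory.
Import numFieldNormedType.Exports.
Local Open Scope classical_set_scope.
Local Open Scope ring_scope.

(* With v = -f/(1-t) one has d_t v = -f/(1-t)^2, while (v.grad)v = (f.grad)f/(1-t)^2
   = f/(1-t)^2 by the first hypothesis; the two cancel, so the zero pressure works.
   Incompressibility is the trace hypothesis scaled by -1/(1-t). *)

Lemma is_derive_div_one_sub (R : realType) (c t : R) : t < 1 ->
  is_derive t 1 (fun s : R => c / (1 - s)) (c / (1 - t) ^+ 2).
Proof.
move=> lt_t1.
have ne0 : 1 - t != 0 by rewrite subr_eq0 gt_eqF.
have d1 : is_derive t (1 : R) (fun s : R => 1 - s) (0 - 1).
  exact: is_deriveB (is_derive_cst (1 : R) t 1) (is_derive_id t 1).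
have := is_deriveZ c (@is_deriveV R (fun s : R => 1 - s) t _ 1 ne0 d1).
suff -> : c / (1 - t) ^+ 2 = c *: (- (1 - t) ^- 2 *: (0 - 1)) by [].
by rewrite /GRing.scale /= sub0r mulrN1 opprK.
Qed.

Lemma opp_div_scaleE (R : realType) (n : nat) (g : 'rV[R]_n -> R) (c : R) :
  (fun y => - g y / c) = (- c^-1) \*: g.
Proof. by apply: funext => y; rewrite /= /GRing.scale /= mulrC mulNr mulrN. Qed.

Lemma derivable_opp_div (R : realType) (n : nat) (g : 'rV[R]_n -> R) (c : R)
    (x v : 'rV[R]_n) :
  derivable g x v -> derivable (fun y => - g y / c) x v.
Proof. by rewrite opp_div_scaleE; apply: derivableZ. Qed.

Lemma derive_opp_div (R : realType) (n : nat) (g : 'rV[R]_n -> R) (c : R)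
    (x v : 'rV[R]_n) :
  derivable g x v -> 'D_v (fun y => - g y / c) x = - c^-1 * 'D_v g x.
Proof. by rewrite opp_div_scaleE; apply: deriveZ. Qed.

Lemma C1_derivable (R : realType) (n : nat) (g : 'rV[R]_n -> R) x j :
  C1 g -> derivable g x (ebase j).
Proof. by case=> dg _; apply: diff_derivable. Qed.

Section SelfSimilarVelocity.
Context {R : realType} {n : nat} {f : 'I_n -> 'rV[R]_n -> R}.
Hypothesis f_C1 : forall i, C1 (f i).

Let v (i : 'I_n) (t : R) (x : 'rV[R]_n) : R := - f i x / (1 - t).

Lemma pderiv_velocity i t x j :
  pderiv (v i t) j x = - (1 - t)^-1 * pderiv (f i) j x.
Proof. exact/derive_opp_div/C1_derivable. Qed.

Lemma divergence_velocity t x :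
  \sum_(i < n) pderiv (v i t) i x = - (1 - t)^-1 * \sum_(i < n) pderiv (f i) i x.
Proof. by rewrite mulr_sumr; apply: eq_bigr => i _; rewrite pderiv_velocity. Qed.

Lemma convection_velocity t x i : t < 1 ->
  \sum_(j < n) v j t x * pderiv (v i t) j x
    = (1 - t)^-2 * \sum_(j < n) f j x * pderiv (f i) j x.
Proof.
move=> lt_t1; rewrite mulr_sumr; apply: eq_bigr => j _.
rewrite pderiv_velocity /v; field.
by rewrite subr_eq0 gt_eqF.
Qed.

End SelfSimilarVelocity.

Theorem proposition1p3 (R : realType) (n : nat) (hn : (1 <= n)%N)
  (f : 'I_n -> 'rV[R]_n -> R)
  (hC1 : forall i, C1 (f i))
  (h1 : forall x i, - f i x + \sum_(j < n) f j x * pderiv (f i) j x = 0)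
  (h2 : forall x, \sum_(i < n) \sum_(j < n) pderiv (f j) i x * pderiv (f i) j x = 0)
  (h3 : forall x, \sum_(i < n) pderiv (f i) i x = 0) :
  exists p : R -> 'rV[R]_n -> R,
    euler_solution `[0, 1[ (fun i t x => - f i x / (1 - t)) p (fun i x => - f i x).
Proof.
exists (fun _ _ => 0); split.
- move=> t x; rewrite /= in_itv /= => /andP[_ lt_t1] i.
  have dt := @is_derive_div_one_sub R (- f i x) t lt_t1.
  split.
  + by case: dt.
  + by move=> j; apply/derivable_opp_div/C1_derivable.
  + exact: derivable_cst.
  + have transport : \sum_(j < n) f j x * pderiv (f i) j x = f i x.
      by apply/subr0_eq; rewrite addrC h1.
    rewrite /tderiv (@derive_val _ _ _ _ _ _ _ dt) (convection_velocity hC1) // transport.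
    by rewrite /pderiv derive_cst oppr0 mulNr [_ * f i x]mulrC addNr.
- by move=> t x _; rewrite (divergence_velocity hC1) h3 mulr0.
- by move=> i x; rewrite subr0 invr1 mulr1.
Qed.
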